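(* Let $(\mathbf X_i)_{i\in\mathbb N}$ be $\mathbb R^d$-valued random vectors, $\mathcal P=(\mathbf x_1,\dots,\mathbf x_p)$ points of $\mathbb R^d$, and $\mathbf Y_i=(\mathbf 1(\mathbf X_i\le\mathbf x_1),\dots,\mathbf 1(\mathbf X_i\le\mathbf x_p))$. For integers $m\ge1$ and $k\ge m+1$ and $\mathbf x\in\mathbb R^d$ let $$E_m^{\mathbf x}(k)=\max_{j\in\{m,\dots,k-1\}}\frac{j(k-j)}{m^{3/2}}|F_{1:j}(\mathbf x)-F_{j+1:k}(\mathbf x)|,\qquad D_m(k)=\max_{j\in\{m,\dots,k-1\}}\frac{j(k-j)}{m^{3/2}}\|\bar{\mathbf Y}_{1:j}-\bar{\mathbf Y}_{j+1:k}\|_{\Sigma_m^{-1}},$$ where $\Sigma_m$ are $p\times p$ random matrices that are positive definite almost surely for all $m\in\mathbb N$, and $\Sigma_m\to\Sigma$ in probability for some positive-definite matrix $\Sigma$. Let $\eta>0$ and assume that for some $\ell\in\{1,\dots,p\}$, $\sup_{k>m}(m/k)^{\frac32+\eta}E_m^{\mathbf x_\ell}(k)\to\infty$ in probability as $m\to\infty$. Then $\sup_{k>m}(m/k)^{\frac32+\eta}D_m(k)\to\infty$ in probability as $m\to\infty$.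
   Context: Inequalities between vectors are componentwise. For integers $j,k\ge1$, $F_{j:k}(\mathbf x)=\frac1{k-j+1}\sum_{i=j}^k\mathbf 1(\mathbf X_i\le\mathbf x)$ if $j\le k$ and $0$ otherwise; $\bar{\mathbf Y}_{j:k}=\frac1{k-j+1}\sum_{i=j}^k\mathbf Y_i$. For $M$ positive definite, $\|\mathbf y\|_M=\sqrt{(\mathbf y^\top M\mathbf y)/p}$. *)

From HB Require Import structures.
From mathcomp Require Import all_boot all_order all_algebra.
From mathcomp Require Import all_classical all_reals all_analysis.
Set Implicit Arguments. Unset Strict Implicit. Unset Printing Implicit Defensive.
Import Order.TTheory GRing.Theory Num.Theory.
Import numFieldNormedType.Exports.
Local Open Scope classical_set_scope.
Local Open Scope ring_scope.

Definition indle {R : realType} {d : nat} (v x : 'rV[R]_d) : R :=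
  if [forall t : 'I_d, v ord0 t <= x ord0 t] then 1 else 0.

Definition Fjk {R : realType} {T : Type} {d : nat}
  (X : nat -> T -> 'rV[R]_d) (j k : nat) (x : 'rV[R]_d) (w : T) : R :=
  if (j <= k)%N then (k - j + 1)%:R^-1 * \sum_(j <= i < k.+1) indle (X i w) x
  else 0.

Definition Yvec {R : realType} {T : Type} {d p : nat}
  (X : nat -> T -> 'rV[R]_d) (pts : 'I_p -> 'rV[R]_d) (i : nat) (w : T) : 'rV[R]_p :=
  \row_(l < p) indle (X i w) (pts l).

Definition Ybar {R : realType} {T : Type} {d p : nat}
  (X : nat -> T -> 'rV[R]_d) (pts : 'I_p -> 'rV[R]_d) (j k : nat) (w : T) : 'rV[R]_p :=
  if (j <= k)%N then (k - j + 1)%:R^-1 *: \sum_(j <= i < k.+1) Yvec X pts i w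
  else 0.

Definition Mnorm {R : realType} {p : nat} (M : 'M[R]_p) (y : 'rV[R]_p) : R :=
  Num.sqrt ((y *m M *m y^T) ord0 ord0 / p%:R).

Definition posdef {R : realType} {p : nat} (M : 'M[R]_p) : Prop :=
  M^T = M /\ forall v : 'rV[R]_p, v != 0 -> 0 < (v *m M *m v^T) ord0 ord0.

Definition Estat {R : realType} {T : Type} {d : nat}
  (X : nat -> T -> 'rV[R]_d) (m : nat) (x : 'rV[R]_d) (k : nat) (w : T) : R :=
  \big[Num.max/0]_(m <= j < k)
    ((j * (k - j))%:R / (m%:R `^ (3/2)) * `|Fjk X 1 j x w - Fjk X j.+1 k x w|).

Definition Dstat {R : realType} {T : Type} {d p : nat}
  (X : nat -> T -> 'rV[R]_d) (pts : 'I_p -> 'rV[R]_d) (Sig : nat -> T -> 'M[R]_p)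
  (m k : nat) (w : T) : R :=
  \big[Num.max/0]_(m <= j < k)
    ((j * (k - j))%:R / (m%:R `^ (3/2)) *
      Mnorm (invmx (Sig m w)) (Ybar X pts 1 j w - Ybar X pts j.+1 k w)).

Definition weighted_sup {R : realType} {T : Type} (eta : R) (m : nat)
  (S : nat -> T -> R) (w : T) : \bar R :=
  ereal_sup [set ((m%:R / k%:R) `^ (3/2 + eta) * S k w)%:E | k in [set k : nat | (m < k)%N]].

Definition to_infty_in_prob {dT : measure_display} {T : measurableType dT} {R : realType}
  (P : probability T R) (Z : nat -> T -> \bar R) : Prop :=
  forall M : R, (fun m => P [set w | (Z m w <= M%:E)%E]) @ \oo --> 0%E.

Definition mx_cvg_in_prob {dT : measure_display} {T : measurableType dT} {R : realType}
  {p : nat} (P : probability T R) (Sig : nat -> T -> 'M[R]_p) (Sig0 : 'M[R]_p) : Prop :=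
  forall (eps : R), 0 < eps -> forall i j : 'I_p,
    (fun m => P [set w | eps < `|Sig m w i j - Sig0 i j|]) @ \oo --> 0%E.

From HB Require Import structures.
From mathcomp Require Import all_boot all_order all_algebra.
From mathcomp Require Import all_classical all_reals all_analysis.
From mathcomp Require Import ring lra measurable_realfun.
Import Order.TTheory GRing.Theory Num.Theory.
Local Open Scope classical_set_scope.
Local Open Scope ring_scope.

(* On the event where Sig_m is positive definite, Cauchy-Schwarz for the inner
   product given by Sig_m yields y_l^2 <= (Sig_m)_ll * y Sig_m^-1 y^T for every
   y in R^p.  The l-th coordinate of Ybar_{1:j} - Ybar_{j+1:k} is
   F_{1:j}(x_l) - F_{j+1:k}(x_l), so E_m^{x_l}(k) <= sqrt(2 p Sig_ll) D_m(k)
   for all k as soon as (Sig_m)_ll <= 2 Sig_ll.  Hence, up to a null set, the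
   event {sup D <= M} lies in {sup E <= sqrt(2 p Sig_ll) M} together with
   {|(Sig_m)_ll - Sig_ll| > Sig_ll}, and both have vanishing probability. *)

Section PositiveDefinite.
Context {R : realType} {p : nat}.
Implicit Types (S : 'M[R]_p) (a b y : 'rV[R]_p).

Definition mxform S a b : R := (a *m S *m b^T) ord0 ord0.

Lemma mxform_sym S a b : S^T = S -> mxform S a b = mxform S b a.
Proof.
move=> symS; have trE (M : 'M[R]_1) : M ord0 ord0 = M^T ord0 ord0 by rewrite mxE.
by rewrite /mxform trE !trmx_mul trmxK symS mulmxA.
Qed.

Lemma mxform_comb S (s t : R) a b : S^T = S ->
  mxform S (s *: a + t *: b) (s *: a + t *: b) =
  s ^+ 2 * mxform S a a + 2 * s * t * mxform S a b + t ^+ 2 * mxform S b b.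
Proof.
move=> symS; rewrite /mxform linearD /= !linearZ /= !mulmxDl !mulmxDr.
rewrite -!scalemxAl -!scalemxAr.
have addE (M N : 'M[R]_1) : (M + N) ord0 ord0 = M ord0 ord0 + N ord0 ord0.
  by rewrite mxE.
have scaleE (k : R) (M : 'M[R]_1) : (k *: M) ord0 ord0 = k * M ord0 ord0.
  by rewrite mxE.
rewrite !addE !scaleE.
by move: (mxform_sym S b a symS); rewrite /mxform => ->; ring.
Qed.

Lemma posdef_mxform_ge0 S a : posdef S -> 0 <= mxform S a a.
Proof.
case=> _ pdS; have [->|a0] := eqVneq a 0; last exact/ltW/pdS.
by rewrite /mxform !mul0mx mxE.
Qed.

Lemma posdef_CauchySchwarz S a b : posdef S ->
  mxform S a b ^+ 2 <= mxform S a a * mxform S b b.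
Proof.
move=> pdS; have [->|b0] := eqVneq b 0.
  by rewrite /mxform !(mulmx0, trmx0) mxE expr0n mulr0.
set c := mxform S b b; set x := mxform S a b.
have c_gt0 : 0 < c by exact: pdS.2.
have := posdef_mxform_ge0 S (c *: a + (- x) *: b) pdS.
rewrite mxform_comb; last exact: pdS.1.
have -> : c ^+ 2 * mxform S a a + 2 * c * - x * x + (- x) ^+ 2 * c =
          c * (c * mxform S a a - x ^+ 2) by ring.
by rewrite pmulr_rge0 // subr_ge0 mulrC.
Qed.

Lemma posdef_unitmx S : posdef S -> S \in unitmx.
Proof.
case=> _ pdS; rewrite unitmxE unitfE; apply/negP => /det0P [v v0 vS].
by have := pdS v v0; rewrite vS mul0mx mxE ltxx.
Qed.

Lemma mxform_delta_mx S a (l : 'I_p) :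
  mxform S a (delta_mx ord0 l) = (a *m S) ord0 l.
Proof. by rewrite /mxform trmx_delta -colE mxE. Qed.

Lemma posdef_diag_gt0 S (l : 'I_p) : posdef S -> 0 < S l l.
Proof.
case=> _ pdS; have e0 : delta_mx ord0 l != 0 :> 'rV[R]_p.
  apply/negP => /eqP /matrixP /(_ ord0 l).
  by rewrite !mxE !eqxx => /eqP; rewrite oner_eq0.
by have := pdS _ e0; rewrite -/(mxform S _ _) mxform_delta_mx -rowE mxE.
Qed.

Lemma posdef_coord_sqr_le S y (l : 'I_p) : posdef S ->
  y ord0 l ^+ 2 <= S l l * mxform (invmx S) y y.
Proof.
move=> pdS; set z := y *m invmx S.
have yE : y = z *m S by rewrite mulmxKV ?posdef_unitmx.
have -> : mxform (invmx S) y y = mxform S z z.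
  by rewrite /mxform {2}yE trmx_mul pdS.1 mulmxA.
have := posdef_CauchySchwarz S z (delta_mx ord0 l) pdS.
by rewrite !mxform_delta_mx -yE -rowE mxE mulrC.
Qed.

Lemma posdef_coord_le_Mnorm S y (l : 'I_p) (B : R) : posdef S -> S l l <= B ->
  `|y ord0 l| <= Num.sqrt (B * p%:R) * Mnorm (invmx S) y.
Proof.
move=> pdS SllB; have Sll_gt0 := posdef_diag_gt0 S l pdS.
have p0 : p%:R != 0 :> R by rewrite pnatr_eq0 -lt0n (leq_ltn_trans _ (ltn_ord l)).
have coord_sqr := posdef_coord_sqr_le S y l pdS.
have q_ge0 : 0 <= mxform (invmx S) y y.
  by rewrite -(pmulr_rge0 _ Sll_gt0) (le_trans (sqr_ge0 _) coord_sqr).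
have B_ge0 : 0 <= B by rewrite (le_trans _ SllB) ?ltW.
rewrite /Mnorm -/(mxform _ y y) -sqrtrM ?mulr_ge0 //.
have -> : B * p%:R * (mxform (invmx S) y y / p%:R) = B * mxform (invmx S) y y.
  by field.
by rewrite -sqrtr_sqr ler_wsqrtr // (le_trans coord_sqr) // ler_wpM2r.
Qed.

End PositiveDefinite.

Lemma bigmaxr_le_scale (R : realDomainType) (I : Type) (r : seq I) (P : pred I)
    (F G : I -> R) (s : R) : 0 <= s -> (forall i, P i -> F i <= s * G i) ->
  \big[Num.max/0]_(i <- r | P i) F i <= s * \big[Num.max/0]_(i <- r | P i) G i.
Proof.
move=> s_ge0 FG; elim/big_ind2: _ => [|x y u v xy uv|]; first by rewrite mulr0.
  by rewrite maxr_pMr // le_max2.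
exact: FG.
Qed.

Section Statistics.
Variables (R : realType) (T : Type) (d p : nat).
Variables (X : nat -> T -> 'rV[R]_d) (pts : 'I_p -> 'rV[R]_d).

Lemma Ybar_coord j k w (l : 'I_p) : Ybar X pts j k w ord0 l = Fjk X j k (pts l) w.
Proof.
rewrite /Ybar /Fjk; case: ifP => _; last by rewrite mxE.
by rewrite mxE summxE; congr (_ * _); apply: eq_bigr => i _; rewrite mxE.
Qed.

Lemma Estat_le_Dstat (Sig : nat -> T -> 'M[R]_p) (l : 'I_p) (B : R) m k w :
  posdef (Sig m w) -> Sig m w l l <= B ->
  Estat X m (pts l) k w <= Num.sqrt (B * p%:R) * Dstat X pts Sig m k w.
Proof.
move=> pdS SllB; apply: bigmaxr_le_scale => [|j _]; first exact: sqrtr_ge0.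
rewrite mulrCA ler_wpM2l ?mulr_ge0 ?invr_ge0 ?powR_ge0 //.
have := posdef_coord_le_Mnorm _ (Ybar X pts 1 j w - Ybar X pts j.+1 k w) _ _ pdS SllB.
by rewrite !mxE !Ybar_coord.
Qed.

End Statistics.

Section WeightedSup.
Variables (R : realType) (T : Type) (eta : R) (m : nat).
Implicit Types (S : nat -> T -> R) (w : T) (M : R).

Lemma weighted_sup_leP S w M : (weighted_sup eta m S w <= M%:E)%E <->
  forall k, (m < k)%N -> (m%:R / k%:R) `^ (3/2 + eta) * S k w <= M.
Proof.
split=> [supM k mk | ubM].
  by rewrite -lee_fin (le_trans _ supM) //; apply: ereal_sup_ubound; exists k.
by apply: ge_ereal_sup => _ [k mk <-]; rewrite lee_fin ubM.
Qed.

Lemma weighted_sup_le_scale S1 S2 w (s : R) M : 0 <= s ->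
  (forall k, S1 k w <= s * S2 k w) ->
  (weighted_sup eta m S2 w <= M%:E)%E -> (weighted_sup eta m S1 w <= (s * M)%:E)%E.
Proof.
move=> s_ge0 S12 /weighted_sup_leP supM; apply/weighted_sup_leP => k mk.
rewrite (le_trans _ (ler_wpM2l s_ge0 (supM k mk))) // mulrCA.
by rewrite ler_wpM2l ?powR_ge0.
Qed.

End WeightedSup.

Lemma measurable_invr (R : realType) : measurable_fun [set: R] GRing.inv.
Proof.
rewrite -(setUv [set 0]); apply/measurable_funU => //; first exact: measurableC.
split; first exact: measurable_fun_set1.
apply: open_continuous_measurable_fun; first by rewrite openC; exact: closed_eq.
by move=> x; rewrite inE /= => x0; apply: inv_continuous; exact/eqP.
Qed.

Section Measurability.
Context {dT : measure_display} {T : measurableType dT} {R : realType}.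

Definition measurable_mx {m n} (A : T -> 'M[R]_(m, n)) :=
  forall i j, measurable_fun setT (fun w => A w i j).

Lemma measurable_ler_set (f g : T -> R) : measurable_fun setT f ->
  measurable_fun setT g -> measurable [set w | f w <= g w].
Proof.
move=> mf mg; rewrite -[X in measurable X]setTI.
exact: (measurable_fun_ler mf mg) measurableT [set true] I.
Qed.

Lemma measurable_ltr_set (f g : T -> R) : measurable_fun setT f ->
  measurable_fun setT g -> measurable [set w | f w < g w].
Proof.
move=> mf mg; rewrite -[X in measurable X]setTI.
exact: (measurable_fun_ltr mf mg) measurableT [set true] I.
Qed.

Lemma measurable_bigmaxr (I : Type) (r : seq I) (F : I -> T -> R) :
  (forall i, measurable_fun setT (F i)) ->
  measurable_fun setT (fun w => \big[Num.max/0]_(i <- r) F i w).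
Proof.
move=> mF; elim: r => [|i r IHr].
  by under eq_fun do rewrite big_nil; exact: measurable_cst.
by under eq_fun do rewrite big_cons; exact: measurable_maxr.
Qed.

Lemma measurable_mxM m n q (A : T -> 'M[R]_(m, n)) (B : T -> 'M[R]_(n, q)) :
  measurable_mx A -> measurable_mx B -> measurable_mx (fun w => A w *m B w).
Proof.
move=> mA mB i j; under eq_fun do rewrite mxE.
by apply: measurable_sum => k; exact: measurable_funM.
Qed.

Lemma measurable_trmx m n (A : T -> 'M[R]_(m, n)) :
  measurable_mx A -> measurable_mx (fun w => (A w)^T).
Proof. by move=> mA i j; under eq_fun do rewrite mxE; exact: mA. Qed.

Lemma measurable_det n (A : T -> 'M[R]_n) :
  measurable_mx A -> measurable_fun setT (fun w => \det (A w)).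
Proof.
move=> mA; apply: measurable_sum => s; apply: measurable_funM => //.
by apply: measurable_prod => i _; exact: mA.
Qed.

Lemma measurable_adj n (A : T -> 'M[R]_n) :
  measurable_mx A -> measurable_mx (fun w => \adj (A w)).
Proof.
move=> mA i j; under eq_fun do rewrite mxE /cofactor.
apply: measurable_funM => //; apply: measurable_det => a b.
by under eq_fun do rewrite !mxE; exact: mA.
Qed.

Lemma measurable_invmx n (A : T -> 'M[R]_n) :
  measurable_mx A -> measurable_mx (fun w => invmx (A w)).
Proof.
move=> mA i j; rewrite (_ : (fun w => _) = fun w =>
    if \det (A w) == 0 then A w i j else (\det (A w))^-1 * \adj (A w) i j).
  apply: measurable_fun_ifT.
  - by apply: measurable_fun_eqr => //; exact: measurable_det.
  - exact: mA.
  apply: measurable_funM; last exact: measurable_adj.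
  by apply: measurableT_comp; [exact: measurable_invr | exact: measurable_det].
apply/funext => w; rewrite /invmx unitmxE unitfE.
by case: eqP => _ /=; rewrite ?mxE.
Qed.

Lemma measurable_Mnorm p (M : T -> 'M[R]_p) (y : T -> 'rV[R]_p) :
  measurable_mx M -> measurable_mx y ->
  measurable_fun setT (fun w => Mnorm (M w) (y w)).
Proof.
move=> mM my; apply: measurableT_comp.
  exact: continuous_measurable_fun (@sqrt_continuous R).
apply: measurable_funM => //.
by apply: measurable_mxM; [exact: measurable_mxM | exact: measurable_trmx].
Qed.

Lemma measurable_weighted_sup_le (eta : R) m (S : nat -> T -> R) (M : R) :
  (forall k, measurable_fun setT (S k)) ->
  measurable [set w | (weighted_sup eta m S w <= M%:E)%E].
Proof.
move=> mS; rewrite (_ : [set w | _] = \bigcap_(k in [set k | (m < k)%N])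
    [set w | (m%:R / k%:R) `^ (3/2 + eta) * S k w <= M]).
  apply: bigcap_measurable => [|k _]; first by exists m.+1 => /=.
  by apply: measurable_ler_set => //; exact: measurable_funM.
by apply/seteqP; split=> w /weighted_sup_leP.
Qed.

End Measurability.

Section StatisticsMeasurability.
Context {dT : measure_display} {T : measurableType dT} {R : realType} {d p : nat}.
Variables (X : nat -> T -> 'rV[R]_d) (pts : 'I_p -> 'rV[R]_d) (Sig : nat -> T -> 'M[R]_p).
Hypothesis mX : forall i (t : 'I_d), measurable_fun setT (fun w => X i w ord0 t).
Hypothesis mSig : forall m, measurable_mx (Sig m).

Lemma measurable_indle i x : measurable_fun setT (fun w => indle (X i w) x).
Proof.
rewrite (_ : (fun w => _) =
    fun w => \prod_(t < d) (if X i w ord0 t <= x ord0 t then 1 else 0)).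
  apply: measurable_prod => t _; apply: measurable_fun_ifT => //.
  exact: measurable_fun_ler.
apply/funext => w; rewrite /indle; case: ifP => [/forallP Xx | /negbT].
  by rewrite big1 // => t _; rewrite Xx.
by rewrite negb_forall => /existsP [t Xtx]; rewrite (bigD1 t) //= (negbTE Xtx) mul0r.
Qed.

Lemma measurable_Fjk j k x : measurable_fun setT (Fjk X j k x).
Proof.
rewrite /Fjk; case: (j <= k)%N => //; apply: measurable_funM => //.
by apply: measurable_sum => i; exact: measurable_indle.
Qed.

Lemma measurable_Estat m x k : measurable_fun setT (Estat X m x k).
Proof.
apply: measurable_bigmaxr => j; apply: measurable_funM => //.
by apply: measurableT_comp => //; apply: measurable_funB; exact: measurable_Fjk.
Qed.

Lemma measurable_Dstat m k : measurable_fun setT (Dstat X pts Sig m k).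
Proof.
apply: measurable_bigmaxr => j; apply: measurable_funM => //.
apply: measurable_Mnorm; first exact: measurable_invmx.
move=> i l; rewrite (ord1 i); under eq_fun do rewrite !mxE !Ybar_coord.
by apply: measurable_funB; exact: measurable_Fjk.
Qed.

End StatisticsMeasurability.

Lemma measure_cvg0_ae_subU {dT : measure_display} {T : measurableType dT} {R : realType}
    (mu : {measure set T -> \bar R}) (A B C : nat -> set T) :
  (forall m, measurable (A m)) -> (forall m, measurable (B m)) ->
  (forall m, measurable (C m)) ->
  (\forall m \near \oo, {ae mu, forall w, A m w -> B m w \/ C m w}) ->
  (fun m => mu (B m)) @ \oo --> 0%E -> (fun m => mu (C m)) @ \oo --> 0%E ->
  (fun m => mu (A m)) @ \oo --> 0%E.
Proof.
move=> mA mB mC ABC cvgB cvgC.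
apply: (@squeeze_cvge _ _ _ _ (cst 0%E) _ (fun m => mu (B m) + mu (C m))%E).
- near=> m; rewrite measure_ge0 /=.
  have [N [mN N0 ABCN]] : {ae mu, forall w, A m w -> B m w \/ C m w} by near: m.
  have ABCsub : A m `<=` B m `|` C m `|` N.
    move=> w Aw; have [Nw|/(contra_not (ABCN w))/contrapT BCw] := pselect (N w).
      by right.
    by left; exact: BCw.
  have mBC : measurable (B m `|` C m) by exact: measurableU.
  rewrite (le_trans (le_measure _ _ _ ABCsub)) ?inE //; first exact: measurableU.
  apply: le_trans (measureU2 _ _ _) _ => //.
  by rewrite [X in (_ + X)%E](_ : _ = 0%E) // adde0 measureU2.
- exact: cvg_cst.
- by rewrite -(adde0 0%E); exact: cvgeD.
Unshelve. all: end_near.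
Qed.

Theorem proposition2p4 (dT : measure_display) (T : measurableType dT) (R : realType)
  (P : probability T R) (d p : nat)
  (X : nat -> T -> 'rV[R]_d) (pts : 'I_p -> 'rV[R]_d)
  (Sig : nat -> T -> 'M[R]_p) (Sig0 : 'M[R]_p) (eta : R) (l : 'I_p) :
  (forall (i : nat) (t : 'I_d), measurable_fun setT (fun w => X i w ord0 t)) ->
  (forall (m : nat) (i j : 'I_p), measurable_fun setT (fun w => Sig m w i j)) ->
  (forall m : nat, (0 < m)%N -> {ae P, forall w, posdef (Sig m w)}) ->
  posdef Sig0 ->
  mx_cvg_in_prob P Sig Sig0 ->
  0 < eta ->
  to_infty_in_prob P (fun m => weighted_sup eta m (Estat X m (pts l))) ->
  to_infty_in_prob P (fun m => weighted_sup eta m (Dstat X pts Sig m)).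
Proof.
move=> mX mSig pdSig pdSig0 cvgSig _ cvgE M.
set c := Sig0 l l; have c_gt0 : 0 < c := posdef_diag_gt0 Sig0 l pdSig0.
set s := Num.sqrt (2 * c * p%:R).
pose Esmall m := [set w | (weighted_sup eta m (Estat X m (pts l)) w <= (s * M)%:E)%E].
pose Sigfar m := [set w | c < `|Sig m w l l - c|].
apply: (measure_cvg0_ae_subU P _ Esmall Sigfar).
- by move=> m; apply: measurable_weighted_sup_le => k; exact: measurable_Dstat.
- by move=> m; apply: measurable_weighted_sup_le => k; exact: measurable_Estat.
- move=> m; apply: measurable_ltr_set => //.
  by apply: measurableT_comp => //; apply: measurable_funB.
- near=> m; apply: filterS (pdSig m _) => [w pdw supD|]; last by near: m; exists 1%N.
  have [|Sll_close] := ltrP c `|Sig m w l l - c|; [by right | left].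
  apply: weighted_sup_le_scale (sqrtr_ge0 _) _ supD => k.
  apply: Estat_le_Dstat pdw _.
  by move: (le_trans (ler_norm _) Sll_close); lra.
- exact: cvgE.
- exact: cvgSig.
Unshelve. all: end_near.
Qed.
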